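(* Let $(\Phi,\cdot,\cap,\xi_\Phi,\delta_\Phi)$ be a transformative $\cap$-semigroup of transformations of a nonempty set $A$. Then for every subset $H_\Phi\subseteq\Phi$ and every $\varphi\in f_{\xi_\Phi}(H_\Phi)$, $$\bigcap_{\psi\in H_\Phi}\mathrm{pr}_1\psi\subseteq\mathrm{pr}_1\varphi.$$
   Context: A transformation of $A$ is a partial map $A\to A$, regarded as a subset of $A\times A$, with domain $\mathrm{pr}_1 f$ and image $\mathrm{pr}_2 f$. The product $f\cdot g$ is the composite ''first $f$, then $g$'': $(f\cdot g)(a)=g(f(a))$, defined exactly when $a\in\mathrm{pr}_1 f$ and $f(a)\in\mathrm{pr}_1 g$. A transformative $\cap$-semigroup of transformations is $(\Phi,\cdot,\cap,\xi_\Phi,\delta_\Phi)$ where $\Phi$ is a set of transformations of $A$ closed under this product and under set-theoretic intersection, $\xi_\Phi=\{(f,g)\in\Phi^2: f$ and $g$ coincide on $\mathrm{pr}_1 f\cap\mathrm{pr}_1 g\}$, and $\delta_\Phi=\{(f,g)\in\Phi^2:\mathrm{pr}_2 f\subseteq\mathrm{pr}_1 g\}$. Write $f\leqslant g$ iff $f\subseteq g$, $f\downarrow g$ iff $(f,g)\in\xi_\Phi$, $f\vdash g$ iff $(f,g)\in\delta_\Phi$. Let $\Phi^*=\Phi\cup\{e\}$ where $e$ is a new formally adjoined identity for the product, with conventions $e\leqslant e$, $e\vdash e$, $f\vdash e$ for all $f\in\Phi$; $a\boxdot b\leqslant c$ abbreviates $a\vdash b\wedge a\cdot b\leqslant c$.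 A subset $H\subseteq\Phi$ is $f_{\xi_\Phi}$-closed if for all $x,y,t\in\Phi^*$ and $z,u,v\in\Phi$: $u\downarrow v\wedge (u\cap v)\cdot x\boxdot y\leqslant z\cdot t\wedge u\in H\wedge v\cdot x\in H\Rightarrow z\in H$. For $X\subseteq\Phi$, $f_{\xi_\Phi}(X)$ is the least $f_{\xi_\Phi}$-closed subset of $\Phi$ containing $X$. The intersection over the empty family is taken to be $A$. *)

Definition trans (A : Type) := A -> A -> Prop.

Section Transformations.
Variable A : Type.

Definition functional (f : trans A) : Prop :=
  forall a b c, f a b -> f a c -> b = c.

Definition pr1 (f : trans A) : A -> Prop := fun a => exists b, f a b.
Definition pr2 (f : trans A) : A -> Prop := fun b => exists a, f a b.

(* f . g = "first f, then g" *)
Definition tcomp (f g : trans A) : trans A :=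
  fun a c => exists b, f a b /\ g b c.

Definition tinter (f g : trans A) : trans A := fun a b => f a b /\ g a b.

Definition tle (f g : trans A) : Prop := forall a b, f a b -> g a b.

Definition txi (f g : trans A) : Prop :=
  forall a b c, f a b -> g a c -> b = c.

Definition tdelta (f g : trans A) : Prop := forall b, pr2 f b -> pr1 g b.

Definition trans_cap_semigroup (Phi : trans A -> Prop) : Prop :=
  (forall f, Phi f -> functional f) /\
  (forall f g, Phi f -> Phi g -> Phi (tcomp f g)) /\
  (forall f g, Phi f -> Phi g -> Phi (tinter f g)).

(* Phi* = Phi ∪ {e}: elements are [option (trans A)], [None] being the
   formally adjoined identity e. *)
Definition in_star (Phi : trans A -> Prop) (x : option (trans A)) : Prop :=
  match x with None => True | Some f => Phi f end.

Definition mulS (f : trans A) (x : option (trans A)) : trans A :=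
  match x with None => f | Some g => tcomp f g end.

Definition deltaS (f : trans A) (x : option (trans A)) : Prop :=
  match x with None => True | Some g => tdelta f g end.

Definition fxi_closed (Phi : trans A -> Prop) (H : trans A -> Prop) : Prop :=
  forall (x y t : option (trans A)) (z u v : trans A),
    in_star Phi x -> in_star Phi y -> in_star Phi t ->
    Phi z -> Phi u -> Phi v ->
    txi u v ->
    deltaS (mulS (tinter u v) x) y ->
    tle (mulS (mulS (tinter u v) x) y) (mulS z t) ->
    H u -> H (mulS v x) ->
    H z.

Definition fxi (Phi : trans A -> Prop) (X : trans A -> Prop) : trans A -> Prop :=
  fun phi => forall H : trans A -> Prop,
    (forall f, H f -> Phi f) -> fxi_closed Phi H ->
    (forall f, X f -> H f) -> H phi.

End Transformations.

Arguments pr1 {A} f _.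
Arguments pr2 {A} f _.
Arguments fxi {A} Phi X _.
Arguments trans_cap_semigroup {A} Phi.


(* The domain condition is pointwise: for each point [a], the elements of
   [Phi] defined at [a] already form an [f_xi]-closed set. Indeed, if [u] and
   [v·x] are defined at [a], then, since [u] and [v] agree wherever both are
   defined, so is [(u ∩ v)·x]; the [⊢] condition extends this to
   [(u ∩ v)·x·y], and the inclusion [≤ z·t] then makes [z] defined at [a]. *)

#[local] Arguments tinter {A} f g _ _.
#[local] Arguments tle {A} f g.
#[local] Arguments txi {A} f g.
#[local] Arguments mulS {A} f x _ _.
#[local] Arguments deltaS {A} f x.
#[local] Arguments fxi_closed {A} Phi H.

Section DomainClosure.

Variable A : Type.
Implicit Types (f g u v z : trans A) (x : option (trans A)) (a : A).

Lemma pr1_tle f g a : tle f g -> pr1 f a -> pr1 g a.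
Proof. intros Hfg [b Hb]; exists b; apply Hfg, Hb. Qed.

Lemma pr1_mulS_l f x a : pr1 (mulS f x) a -> pr1 f a.
Proof.
  destruct x as [g|]; simpl; [intros [c [b [Hb _]]]; exists b|]; easy.
Qed.

Lemma pr1_mulS_deltaS f x a : deltaS f x -> pr1 f a -> pr1 (mulS f x) a.
Proof.
  destruct x as [g|]; simpl; [|easy].
  intros Hfg [b Hb].
  destruct (Hfg b (ex_intro _ a Hb)) as [c Hc].
  exists c, b; split; assumption.
Qed.

Lemma pr1_mulS_tinter u v x a :
  txi u v -> pr1 u a -> pr1 (mulS v x) a -> pr1 (mulS (tinter u v) x) a.
Proof.
  intros Huv [c Hc].
  destruct x as [g|]; simpl.
  - intros [d [b [Hb Hg]]].
    pose proof (Huv _ _ _ Hc Hb); subst b.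
    exists d, c; repeat split; assumption.
  - intros [d Hd].
    pose proof (Huv _ _ _ Hc Hd); subst d.
    exists c; split; assumption.
Qed.

Lemma fxi_closed_defined_at (Phi : trans A -> Prop) a :
  fxi_closed Phi (fun f => Phi f /\ pr1 f a).
Proof.
  intros x y t z u v _ _ _ Hz _ _ Huv Hdelta Hle [_ Hu] [_ Hvx].
  split; [exact Hz|].
  apply (pr1_mulS_l z t), (pr1_tle _ _ _ Hle), pr1_mulS_deltaS; [exact Hdelta|].
  apply pr1_mulS_tinter; assumption.
Qed.

End DomainClosure.

Theorem proposition7 (A : Type) (Phi : trans A -> Prop) :
  inhabited A ->
  trans_cap_semigroup Phi ->
  forall (H : trans A -> Prop),
    (forall f, H f -> Phi f) ->
    forall phi, fxi Phi H phi ->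
    forall a : A, (forall psi, H psi -> pr1 psi a) -> pr1 phi a.
Proof.
  intros _ _ H HPhi phi Hphi a Ha.
  apply (Hphi (fun f => Phi f /\ pr1 f a)).
  - intros f [Hf _]; exact Hf.
  - apply fxi_closed_defined_at.
  - intros f Hf; split; [apply HPhi | apply Ha]; exact Hf.
Qed.
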